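(* Let $n\ge3$, $\mathcal{O}\subset\mathbb{R}^n$ bounded open with $C^2$ boundary, and suppose (H1) holds. Then for every $\tau<T$ the operator $A(t)$ is uniformly strongly elliptic on $[\tau,T]$: there exists $C>0$ (depending on $r,\tau,T$) such that $\sum_{j,k=1}^n a_{jk}(t,y)z_jz_k\ge C\|z\|^2_{\mathbb{R}^n}$ for all $(t,y)\in[\tau,T]\times\overline{\mathcal{O}}$ and $z\in\mathbb{R}^n$.
   Context: $r\in C^1(\mathbb{R}\times\overline{\mathcal{O}},\mathbb{R}^n)$ with $r(t,\cdot):\overline{\mathcal{O}}\to r(t,\overline{\mathcal{O}})$ a $C^2$ diffeomorphism for each $t$, inverse $r^{-1}(t,\cdot)=(r^{-1}_1,\dots,r^{-1}_n)$; $a_{jk}(t,y)=\sum_{i=1}^n \frac{\partial r^{-1}_j}{\partial x_i}(t,r(t,y))\frac{\partial r^{-1}_k}{\partial x_i}(t,r(t,y))$; $A(t)v=-\sum_{j,k}\partial_{y_j}(a_{jk}(t,\cdot)\partial_{y_k}v)+\beta v$, $\beta>0$. (H1): $r^{-1}(\cdot,x)$ is $C^1$ in $t$, and there are $h\in C(\mathbb{R})$, $p_{ik}\in C^1(\mathbb{R}^n,\mathbb{R})$ with $\frac{\partial r^{-1}_k}{\partial x_i}(t,r(t,y))=h(t)p_{ik}(y)$ for all $t,y,i,k$; $h$ is Hölder continuous with exponent $\theta\in(0,1]$ and $0<h_0\le h\le h_1$. *)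

From HB Require Import structures.
From mathcomp Require Import all_boot all_order all_algebra.
From mathcomp Require Import all_classical all_reals all_analysis.
Set Implicit Arguments. Unset Strict Implicit. Unset Printing Implicit Defensive.
Import Order.TTheory GRing.Theory Num.Theory.
Import numFieldNormedType.Exports.
Local Open Scope classical_set_scope.
Local Open Scope ring_scope.

Section Defs.
Variable R : realType.
Variable n : nat.

Definition vcoord (y : 'rV[R]_n) (i : 'I_n) : R := y ord0 i.

Definition evec (i : 'I_n) : 'rV[R]_n := \row_(j < n) (i == j)%:R.

Definition partial (W : normedModType R) (f : 'rV[R]_n -> W) (i : 'I_n)
  (x : 'rV[R]_n) : W := derive f x (evec i).

Fixpoint Ck (W : normedModType R) (k : nat) (U : set 'rV[R]_n)
  (f : 'rV[R]_n -> W) : Prop :=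
  match k with
  | 0 => forall x, U x -> {for x, continuous f}
  | k'.+1 => (forall x, U x -> {for x, continuous f}) /\
      forall i : 'I_n, (forall x, U x -> derivable f x (evec i)) /\
                       Ck k' U (partial f i)
  end.

Definition Ck_on (W : normedModType R) (k : nat) (S : set 'rV[R]_n)
  (f : 'rV[R]_n -> W) : Prop :=
  exists U : set 'rV[R]_n, open U /\ S `<=` U /\ Ck k U f.

(* O has a C^2 boundary: near each boundary point, O is (after choosing a
   coordinate direction i and an orientation s = +-1) the subgraph
   { x | s * x_i < s * g(x) } of a C^2 function g not depending on x_i. *)
Definition C2_boundary (O : set 'rV[R]_n) : Prop :=
  forall x0, (closure O `\` O) x0 ->
    exists (e : R) (i : 'I_n) (s : R) (g : 'rV[R]_n -> R),
      [/\ 0 < e, s = 1 \/ s = -1,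
          (forall x c, g (x + c *: evec i) = g x),
          Ck 2 setT g &
          (forall x, ball x0 e x -> (O x <-> s * vcoord x i < s * g x))].

Definition C1_joint (S : set 'rV[R]_n) (r : R -> 'rV[R]_n -> 'rV[R]_n) : Prop :=
  exists U : set 'rV[R]_n, [/\ open U, S `<=` U &
    forall t y, U y ->
      [/\ {for (t, y), continuous (fun p : R * 'rV[R]_n => r p.1 p.2)},
          derivable (fun s => r s y) t 1,
          {for (t, y), continuous
              (fun p : R * 'rV[R]_n => derive (fun s => r s p.2) p.1 1)} &
          forall i : 'I_n, derivable (r t) y (evec i) /\
            {for (t, y), continuous
              (fun p : R * 'rV[R]_n => partial (r p.1) i p.2)}]].

Definition acoef (r rinv : R -> 'rV[R]_n -> 'rV[R]_n) (j k : 'I_n)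
  (t : R) (y : 'rV[R]_n) : R :=
  \sum_(i < n) partial (fun x => vcoord (rinv t x) j) i (r t y) *
               partial (fun x => vcoord (rinv t x) k) i (r t y).

End Defs.

(* Since d r^{-1}_k/dx_i (t, r(t,y)) = h(t) p_ik(y), the form
   sum_jk a_jk(t,y) z_j z_k equals h(t)^2 |P(y) z|^2 with P = (p_ik), so it
   suffices to bound |z|^2 by B |P(y) z|^2 uniformly on the closure of O and to
   use h >= h0.  At time 0, differentiating (z . r^{-1}(0, .)) (r(0, y)) = z . y
   in the direction e_l bounds |z_l| by n h(0) K sum_i |(P(y) z)_i|, where K
   bounds the derivative of r(0, .) on the compact closure of O; Cauchy-Schwarz
   then gives the estimate on O, and continuity of P extends it to the closure.
   Only partial derivatives of r^{-1} are available, so the chain rule is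
   replaced by the inequality |d_l (F o g)| <= n (sum_i |d_i F|) |d_l g|, which
   holds as soon as the d_i F are continuous at the point: by the mean value
   theorem along coordinate paths, F is then Lipschitz at that point with
   constant n sum_i |d_i F|. *)

From HB Require Import structures.
From mathcomp Require Import all_boot all_order all_algebra.
From mathcomp Require Import all_classical all_reals all_analysis.
From mathcomp Require Import ring lra.
Import Order.TTheory GRing.Theory Num.Theory.
Import numFieldNormedType.Exports.
Local Open Scope classical_set_scope.
Local Open Scope ring_scope.

Section RealFacts.
Context {R : realType}.

Lemma sqr_sum_le (m : nat) (a : 'I_m -> R) :
  (\sum_i a i) ^+ 2 <= m%:R * \sum_i a i ^+ 2.
Proof.
elim: m a => [|m IH] a; first by rewrite !big_ord0 expr0n /= mul0r.
rewrite !big_ord_recr /=.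
set S := \sum_(i < m) _; set Q := \sum_(i < m) _; set b := a ord_max.
have IHa : S ^+ 2 <= m%:R * Q by apply: IH.
have cross_le : 2 * S * b <= Q + m%:R * b ^+ 2.
  have -> : m%:R * b ^+ 2 = \sum_(i < m) b ^+ 2.
    by rewrite sumr_const card_ord mulr_natl.
  rewrite /S /Q mulr_sumr mulr_suml.
  rewrite -big_split /=; apply: ler_sum => i _.
  have : 0 <= (a (widen_ord (leqnSn m) i) - b) ^+ 2 by apply: sqr_ge0.
  by rewrite sqrrB; lra.
rewrite -natr1; nra.
Qed.

Lemma sum_sqr_le_of_abs_le (m : nat) (z a : 'I_m -> R) (A : R) : 0 <= A ->
  (forall l, `|z l| <= A * \sum_i `|a i|) ->
  \sum_l z l ^+ 2 <= (m%:R * A) ^+ 2 * \sum_i a i ^+ 2.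
Proof.
move=> A0 za.
have sqr_z l : z l ^+ 2 <= A ^+ 2 * (m%:R * \sum_i a i ^+ 2).
  apply: le_trans (_ : (A * \sum_i `|a i|) ^+ 2 <= _).
    rewrite -real_normK ?num_real //.
    by have := za l; have := normr_ge0 (z l); nra.
  rewrite exprMn ler_wpM2l ?sqr_ge0 //.
  under [X in _ <= _ * X]eq_bigr do rewrite -real_normK ?num_real //.
  exact: sqr_sum_le.
apply: le_trans (ler_sum _ (fun l _ => sqr_z l)) _.
by rewrite sumr_const card_ord -mulr_natl; lra.
Qed.

Lemma le_mul_of_forall_addr (a x y : R) : 0 <= y ->
  (forall e, 0 < e -> a <= (x + e) * y) -> a <= x * y.
Proof.
move=> y0 H; apply/ler_addgt0Pr => e e0.
have y1 : 0 < y + 1 by lra.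
apply: le_trans (H _ (divr_gt0 e0 y1)) _.
rewrite mulrDl lerD2l mulrAC ler_pdivrMr //; nra.
Qed.

Lemma continuous_sum (T : topologicalType) (I : Type) (s : seq I)
    (f : I -> T -> R) x :
  (forall i, {for x, continuous (f i)}) ->
  {for x, continuous (fun y => \sum_(i <- s) f i y)}.
Proof.
move=> cf; elim: s => [|a s IH].
  rewrite (_ : (fun y => _) = cst 0); first exact: cst_continuous.
  by apply: funext => y; rewrite big_nil.
rewrite (_ : (fun y => _) = f a + (fun y => \sum_(i <- s) f i y)).
  exact: continuousD.
by apply: funext => y; rewrite big_cons.
Qed.

Lemma closure_bounded_set (V : normedModType R) (O : set V) :
  bounded_set O -> bounded_set (closure O).
Proof.
move=> bO.
suff : \forall M \near +oo, globally (closure O) [set x : V | `|x| <= M] by [].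
have : \forall M \near +oo, globally O [set x : V | `|x| <= M] := bO.
apply: filterS => M OM x Ox.
have ballM : closed [set x : V | `|x| <= M].
  exact: (continuous_closedP _).1 norm_continuous _ (@closed_le _ M).
suff : closure O `<=` [set x : V | `|x| <= M] by apply.
by rewrite [X in _ `<=` X](closure_id _).1 //; apply: closureS.
Qed.

Lemma le_on_closure (T : topologicalType) (O : set T) (c : R) (g : T -> R) :
  continuous g -> (forall y, O y -> c <= g y) ->
  forall y, closure O y -> c <= g y.
Proof.
move=> cg cO y Oy.
have cl := (continuous_closedP g).1 cg _ (@closed_ge _ c).
suff : closure O `<=` g @^-1` [set u | c <= u] by apply.
by rewrite [X in _ `<=` X](closure_id _).1 //; apply: closureS.
Qed.

End RealFacts.

Section RowVectors.
Context {R : realType} {n : nat}.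
Implicit Types (v x : 'rV[R]_n).

Lemma coord_le_mx_norm v i : `|v ord0 i| <= `|v|.
Proof.
rewrite [leRHS]/Num.Def.normr /= mx_normrE.
by apply/bigmax_geP; right; exists (ord0, i).
Qed.

Lemma mx_norm_lt v d : 0 < d -> (forall i, `|v ord0 i| < d) -> `|v| < d.
Proof.
move=> d0 vd; rewrite [ltLHS]/Num.Def.normr /= mx_normrE.
by apply: bigmax_lt => //= -[a i] _ /=; rewrite (ord1 a).
Qed.

Lemma sum_coord_le_mx_norm v : \sum_i `|v ord0 i| <= n%:R * `|v|.
Proof.
have -> : n%:R * `|v| = \sum_(i < n) `|v| by rewrite sumr_const card_ord mulr_natl.
by apply: ler_sum => i _; exact: coord_le_mx_norm.
Qed.

Lemma bounded_on_closure (O U : set 'rV[R]_n) (W : normedModType R)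
    (g : 'rV[R]_n -> W) :
  bounded_set O -> closure O `<=` U -> (forall y, U y -> {for y, continuous g}) ->
  exists2 K, 0 < K & forall y, closure O y -> `|g y| <= K.
Proof.
move=> bO OU cg.
have cptO : compact (closure O).
  apply: bounded_closed_compact; last exact: closed_closure.
  exact: closure_bounded_set.
have cptg : compact (g @` closure O).
  apply: continuous_compact cptO.
  by apply: continuous_in_subspaceT => y /set_mem /OU /cg.
have [M [_ HM]] := compact_bounded cptg.
exists (Num.max M 0 + 1) => [|y Oy]; first by rewrite ltr_wpDl ?le_max ?lexx ?orbT.
by apply: HM; [rewrite ltr_pwDr ?le_max ?lexx | exists y].
Qed.

End RowVectors.

Section MeanValue.
Context {R : realType}.

Lemma MVT_segment_abs_le (phi dphi : R -> R) (a b G : R) : a <= b ->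
  (forall s, s \in `[a, b] -> is_derive s 1 phi (dphi s) /\ `|dphi s| <= G) ->
  `|phi b - phi a| <= G * (b - a).
Proof.
move=> ab H.
have [c cab ->] := MVT_segment ab (fun c cI => (H c (subset_itv_oo_cc cI)).1)
  (derivable_within_continuous (fun c cI => @ex_derive _ _ _ _ _ _ _ (H c cI).1)).
have ba : 0 <= b - a by rewrite subr_ge0.
by rewrite normrM (ger0_norm ba) ler_wpM2r // (H c cab).2.
Qed.

Lemma is_derive_line (V W : normedModType R) (f : V -> W) (q v : V) (s : R)
    (l : W) :
  is_derive (q + s *: v) v f l -> is_derive s 1 (fun t => f (q + t *: v)) l.
Proof.
move=> [fd <-].
have quot_eq : (fun h : R => h^-1 *: (f (q + (h *: 1 + s) *: v) - f (q + s *: v)))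
    = (fun h => h^-1 *: (f (h *: v + (q + s *: v)) - f (q + s *: v))).
  by apply: funext => h; rewrite [h *: 1]mulr1 scalerDl addrCA addrC.
by split; rewrite /derivable /derive /= quot_eq.
Qed.

Lemma abs_sub_line_le (V : normedModType R) (f f' : V -> R) (q v : V)
    (a G : R) :
  (forall s, `|s| <= `|a| ->
     is_derive (q + s *: v) v f (f' (q + s *: v)) /\ `|f' (q + s *: v)| <= G) ->
  `|f (q + a *: v) - f q| <= G * `|a|.
Proof.
move=> H; pose phi t := f (q + t *: v).
have Hphi (s : R) : `|s| <= `|a| ->
    is_derive s (1 : R) phi (f' (q + s *: v)) /\ `|f' (q + s *: v)| <= G.
  by move=> /H[fd fb]; split => //; exact: is_derive_line.
have -> : f q = phi 0 by rewrite /phi scale0r addr0.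
rewrite -/(phi a).
have [a0|a0] := leP 0 a.
  rewrite (ger0_norm a0) -[X in G * X]subr0.
  apply: MVT_segment_abs_le a0 _ => s; rewrite in_itv /= => /andP[s0 sa].
  by apply: Hphi; rewrite !ger0_norm // (le_trans s0 sa).
rewrite distrC (ltr0_norm a0) -[X in G * X]sub0r.
apply: MVT_segment_abs_le (ltW a0) _ => s; rewrite in_itv /= => /andP[sa s0].
by apply: Hphi; rewrite !ler0_norm ?lerN2 // ltW.
Qed.

End MeanValue.

Section PointwiseLipschitz.
Context {R : realType}.

Definition lipschitz_at {V W : normedModType R} (f : V -> W) (x : V) (L : R) :=
  forall e, 0 < e -> \forall y \near x, `|f y - f x| <= (L + e) * `|y - x|.

Lemma lipschitz_at_derive_le (V W : normedModType R) (f : V -> W) (g : R -> V)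
    (L : R) (D : V) (c : W) :
  lipschitz_at f (g 0) L -> is_derive (0 : R) (1 : R) g D ->
  is_derive (0 : R) (1 : R) (f \o g) c ->
  `|c| <= L * `|D|.
Proof.
move=> fL gD fgc; apply: le_mul_of_forall_addr => // e e0.
have gq : (fun s : R => s^-1 *: (g (s *: 1 + 0) - g 0)) @ 0^' --> D.
  by case: gD => gd <-; exact: gd.
have fgq : (fun s : R => s^-1 *: (f (g (s *: 1 + 0)) - f (g 0))) @ 0^' --> c.
  by case: fgc => fgd <-; exact: fgd.
have gcont : {for 0, continuous g}.
  by apply: differentiable_continuous; apply/derivable1_diffP; case: gD.
apply: ler_cvg_to (cvg_norm fgq) (cvgMl_tmp (a := L + e) (cvg_norm gq)) _.
have fLe : \forall s \near 0, `|f (g s) - f (g 0)| <= (L + e) * `|g s - g 0|.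
  exact: gcont (fL e e0).
near=> s.
rewrite !normrZ mulrCA ler_wpM2l // [s *: 1]mulr1 addr0.
by near: s; apply: nbhs_dnbhs.
Unshelve. all: by end_near. Qed.

End PointwiseLipschitz.

Section PartialDerivatives.
Context {R : realType} {n : nat}.

Definition row_interp (x x0 : 'rV[R]_n) (j : nat) : 'rV[R]_n :=
  \row_m (if (m < j)%N then x ord0 m else x0 ord0 m).

Lemma row_interpS (x x0 : 'rV[R]_n) (j : 'I_n) :
  row_interp x x0 j.+1 = row_interp x x0 j + (x ord0 j - x0 ord0 j) *: evec R j.
Proof.
apply/rowP => m; rewrite !mxE ltnS leq_eqVlt.
case: (eqVneq m j) => [->|mj] /=; first by rewrite ltnn eqxx mulr1 addrC subrK.
have -> : (nat_of_ord m == nat_of_ord j) = false by apply/negbTE.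
by rewrite /= mulr0 addr0.
Qed.

Lemma row_interp_ball (x x0 : 'rV[R]_n) (d s : R) (j : 'I_n) :
  ball x0 d x -> `|s| <= `|x ord0 j - x0 ord0 j| ->
  ball x0 d (row_interp x x0 j + s *: evec R j).
Proof.
rewrite -!ball_normE /= => x0x sj.
have d0 : 0 < d by apply: le_lt_trans x0x; exact: normr_ge0.
apply: mx_norm_lt => // m; rewrite !mxE.
case: (eqVneq j m) => [<-|jm] /=.
  rewrite ltnn mulr1 opprD addrA subrr sub0r normrN.
  apply: le_lt_trans sj _; apply: le_lt_trans x0x.
  by have := coord_le_mx_norm (x0 - x) j; rewrite !mxE distrC.
rewrite mulr0 addr0; case: ifP => _; last by rewrite subrr normr0.
by apply: le_lt_trans x0x; have := coord_le_mx_norm (x0 - x) m; rewrite !mxE.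
Qed.

Lemma abs_sub_le_partials_bound (f : 'rV[R]_n -> R) (df : 'I_n -> 'rV[R]_n -> R)
    (x0 : 'rV[R]_n) (d G : R) :
  (forall x, ball x0 d x -> forall m,
     is_derive x (evec R m) f (df m x) /\ `|df m x| <= G) ->
  forall x, ball x0 d x -> `|f x - f x0| <= G * \sum_m `|x ord0 m - x0 ord0 m|.
Proof.
move=> fd x x0x.
have step (j : 'I_n) : `|f (row_interp x x0 j.+1) - f (row_interp x x0 j)|
    <= G * `|x ord0 j - x0 ord0 j|.
  rewrite row_interpS; apply: (@abs_sub_line_le _ _ _ (df j)) => s sj.
  by apply: fd; exact: row_interp_ball.
have -> : f x - f x0 =
    \sum_(0 <= j < n) (f (row_interp x x0 j.+1) - f (row_interp x x0 j)).
  rewrite telescope_sumr //; congr (f _ - f _);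
    by apply/rowP => m; rewrite !mxE ?ltn_ord.
rewrite big_mkord mulr_sumr; apply: le_trans (ler_norm_sum _ _ _) _.
by apply: ler_sum => j _; exact: step.
Qed.

Lemma lipschitz_at_partials (f : 'rV[R]_n -> R) (df : 'I_n -> 'rV[R]_n -> R)
    (x : 'rV[R]_n) :
  (\forall y \near x, forall m, is_derive y (evec R m) f (df m y)) ->
  (forall m, {for x, continuous (df m)}) ->
  lipschitz_at f x (n%:R * \sum_m `|df m x|).
Proof.
move=> fd dfc e e0.
set G := \sum_m `|df m x|.
have n1 : 0 < n%:R + 1 :> R by rewrite ltr_wpDl.
set e' := e / (n%:R + 1).
have e'0 : 0 < e' by rewrite divr_gt0.
have dfe : \forall y \near x, forall m, `|df m x - df m y| < e'.
  apply: (@filter_forall _ _ (fun m y => `|df m x - df m y| < e') (nbhs x) _) => m.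
  exact: (@cvgrPdist_lt _ _ _ (nbhs x) _ (df m) (df m x)).1 (dfc m) e' e'0.
have : \forall y \near x, forall m,
    is_derive y (evec R m) f (df m y) /\ `|df m y| <= G + e'.
  near=> y => m; split; first by move: m; near: y.
  rewrite -[df m y](subrKC (df m x)) (le_trans (ler_normD _ _)) //.
  apply: lerD; first by rewrite /G (bigD1 m) //= lerDl sumr_ge0.
  by apply/ltW; rewrite distrC; move: m; near: y.
case/nbhs_ballP => d d0 /abs_sub_le_partials_bound fG.
apply/nbhs_ballP; exists d => // y /fG /le_trans; apply.
have G0 : 0 <= G + e' by rewrite addr_ge0 ?sumr_ge0 // ltW.
have yx : \sum_m `|y ord0 m - x ord0 m| <= n%:R * `|y - x|.
  by have := sum_coord_le_mx_norm (y - x); under eq_bigr do rewrite !mxE.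
apply: le_trans (ler_wpM2l G0 yx) _.
rewrite mulrA ler_wpM2r // mulrDl [G * _]mulrC lerD2l.
by rewrite /e' mulrAC ler_pdivrMr // ler_pM2l // lerDl.
Unshelve. all: by end_near. Qed.

Lemma derive_comp_abs_le (m : nat) (F : 'rV[R]_n -> R)
    (dF : 'I_n -> 'rV[R]_n -> R) (g : 'rV[R]_m -> 'rV[R]_n) (y : 'rV[R]_m)
    (l : 'I_m) (c : R) :
  (\forall x \near g y, forall i, is_derive x (evec R i) F (dF i x)) ->
  (forall i, {for g y, continuous (dF i)}) ->
  derivable g y (evec R l) ->
  is_derive y (evec R l) (F \o g) c ->
  `|c| <= n%:R * (\sum_i `|dF i (g y)|) * `|partial g l y|.
Proof.
move=> Fd dFc gd Fgc.
have y0 : y + 0 *: evec R l = y by rewrite scale0r addr0.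
apply: (@lipschitz_at_derive_le _ _ _ F (fun s => g (y + s *: evec R l))).
- by rewrite /= y0; exact: lipschitz_at_partials.
- by apply: is_derive_line; rewrite y0; exact: derivableP.
- by apply: (@is_derive_line _ _ _ (F \o g)); rewrite y0.
Qed.

End PartialDerivatives.

Section InverseJacobian.
Context {R : realType} {n : nat}.
Implicit Types (f : 'rV[R]_n -> 'rV[R]_n) (w x y : 'rV[R]_n).

Lemma partial_coord f x (i k : 'I_n) : derivable f x (evec R i) ->
  partial (fun x => vcoord (f x) k) i x = vcoord (partial f i x) k.
Proof. by move=> fd; rewrite /partial /vcoord derive_mx // mxE. Qed.

Lemma is_derive_dot f w x (i : 'I_n) : derivable f x (evec R i) ->
  is_derive x (evec R i) (fun x => \sum_k vcoord w k * vcoord (f x) k)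
    (\sum_k vcoord w k * vcoord (partial f i x) k).
Proof.
move=> fd.
have fkd k : is_derive x (evec R i) (vcoord w k \*: (fun x => vcoord (f x) k))
    (vcoord w k *: vcoord (partial f i x) k).
  apply: is_deriveZ; rewrite -partial_coord //; apply: derivableP.
  by move/derivable_mxP: fd; exact.
by have := is_derive_sum fkd; rewrite fct_sumE.
Qed.

Lemma coord_le_inverse_jacobian (O : set 'rV[R]_n)
    (r0 ri : 'rV[R]_n -> 'rV[R]_n) y w (l : 'I_n) :
  open O -> O y -> (forall y', O y' -> ri (r0 y') = y') ->
  (\forall x \near r0 y, forall i, derivable ri x (evec R i)) ->
  (forall i, {for r0 y, continuous (partial ri i)}) ->
  derivable r0 y (evec R l) ->
  `|vcoord w l| <= n%:R * (\sum_i
       `|\sum_k vcoord w k * partial (fun x => vcoord (ri x) k) i (r0 y)|)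
     * `|partial r0 l y|.
Proof.
move=> oO Oy riK rid ric r0d.
pose dF i x := \sum_k vcoord w k * vcoord (partial ri i x) k.
have dFE i : \sum_k vcoord w k * partial (fun x => vcoord (ri x) k) i (r0 y)
    = dF i (r0 y).
  apply: eq_bigr => k _.
  by rewrite partial_coord; last exact: (nbhs_singleton rid).
under eq_bigr do rewrite dFE.
apply: (@derive_comp_abs_le _ _ _ (fun x => \sum_k vcoord w k * vcoord (ri x) k)).
- by near=> x => i; apply: is_derive_dot; move: i; near: x.
- move=> i; apply: continuous_sum => k.
  apply: continuousM; first exact: cst_continuous.
  apply: (@continuous_comp _ _ _ (partial ri i) (fun M => vcoord M k)).
    exact: ric.
  exact: coord_continuous.
- exact: r0d.
- have lin : is_derive y (evec R l) (fun x => \sum_k vcoord w k * vcoord x k)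
      (vcoord w l).
    have := is_derive_dot id w y l
      (@ex_derive _ _ _ _ _ _ _ (is_derive_id y (evec R l))).
    rewrite /partial derive_id (bigD1 l) //= big1 => [|k kl].
      by rewrite /vcoord mxE eqxx mulr1 addr0.
    by rewrite /vcoord mxE eq_sym (negbTE kl) mulr0.
  apply: near_eq_is_derive lin; near=> x; rewrite /= riK //.
  by near: x; exact: oO.
Unshelve. all: by end_near. Qed.

End InverseJacobian.

Section Ellipticity.
Context {R : realType} {n : nat}.
Variable p : 'I_n -> 'I_n -> 'rV[R]_n -> R.

Definition qform (y z : 'rV[R]_n) : R :=
  \sum_i (\sum_k p i k y * vcoord z k) ^+ 2.

Lemma continuous_qform z : (forall i k, continuous (p i k)) ->
  continuous (fun y => qform y z).
Proof.
move=> pc y; apply: continuous_sum => i.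
apply: (@continuous_comp _ _ _ (fun y => \sum_k p i k y * vcoord z k)
  (fun u => u ^+ 2)); last exact: exprn_continuous.
apply: continuous_sum => k.
by apply: continuousM; [exact: pc | exact: cst_continuous].
Qed.

Lemma acoef_qform (r rinv : R -> 'rV[R]_n -> 'rV[R]_n) (h : R -> R) t y z :
  (forall i k, partial (fun x => vcoord (rinv t x) k) i (r t y) = h t * p i k y) ->
  \sum_j \sum_k acoef r rinv j k t y * vcoord z j * vcoord z k
    = h t ^+ 2 * qform y z.
Proof.
move=> rinvE; set h2 := h t ^+ 2.
have acoefE j k : acoef r rinv j k t y = \sum_i h2 * (p i j y * p i k y).
  by apply: eq_bigr => i _; rewrite !rinvE /h2; ring.
rewrite /qform mulr_sumr.
under [RHS]eq_bigr do rewrite expr2 mulr_suml mulr_sumr.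
under [RHS]eq_bigr do under eq_bigr do rewrite mulr_sumr mulr_sumr.
rewrite [RHS]exchange_big /=; apply: eq_bigr => j _.
rewrite [RHS]exchange_big /=; apply: eq_bigr => k _.
by rewrite acoefE !mulr_suml; apply: eq_bigr => i _; ring.
Qed.

Lemma sum_sqr_le_qform (O V : set 'rV[R]_n) (r0 ri : 'rV[R]_n -> 'rV[R]_n)
    (c K : R) :
  open O -> open V -> (forall y, O y -> V (r0 y)) ->
  (forall y, O y -> ri (r0 y) = y) ->
  (forall x, V x -> forall i, derivable ri x (evec R i)) ->
  (forall x, V x -> forall i, {for x, continuous (partial ri i)}) ->
  (forall y, O y -> forall l, derivable r0 y (evec R l)) ->
  (forall y, O y -> forall l, `|partial r0 l y| <= K) ->
  (forall y, O y -> forall i k,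
     partial (fun x => vcoord (ri x) k) i (r0 y) = c * p i k y) ->
  0 <= c -> 0 <= K ->
  forall y z, O y ->
    \sum_j vcoord z j ^+ 2 <= (n%:R * (n%:R * c * K)) ^+ 2 * qform y z.
Proof.
move=> oO oV OV riK rid ric r0d r0K riE c0 K0 y z Oy.
apply: sum_sqr_le_of_abs_le => [|l]; first by rewrite !mulr_ge0.
have rid_near : \forall x \near r0 y, forall i, derivable ri x (evec R i).
  by apply: filterS (oV _ (OV y Oy)); exact: rid.
have := coord_le_inverse_jacobian _ _ _ _ z l oO Oy riK rid_near
  (ric _ (OV y Oy)) (r0d y Oy l).
move/le_trans; apply.
set S := \sum_i `|\sum_k p i k y * vcoord z k|.
have -> : \sum_i
    `|\sum_k vcoord z k * partial (fun x => vcoord (ri x) k) i (r0 y)| = c * S.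
  rewrite /S mulr_sumr; apply: eq_bigr => i _.
  rewrite -[c in c * _]ger0_norm // -normrM mulr_sumr; congr `|_|.
  by apply: eq_bigr => k _; rewrite riE //; ring.
have ncS : 0 <= n%:R * c * S by rewrite !mulr_ge0 // sumr_ge0.
by have := r0K y Oy l; nra.
Qed.

Lemma qform_coercive (O : set 'rV[R]_n) (r0 ri : 'rV[R]_n -> 'rV[R]_n) (c : R) :
  (0 < n)%N -> open O -> bounded_set O ->
  Ck_on 2 (closure O) r0 -> Ck_on 2 (r0 @` closure O) ri ->
  (forall y, closure O y -> ri (r0 y) = y) ->
  (forall i k, continuous (p i k)) ->
  (forall y i k, closure O y ->
     partial (fun x => vcoord (ri x) k) i (r0 y) = c * p i k y) ->
  0 < c ->
  exists2 B, 0 < B &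
    forall y z, closure O y -> (\sum_j vcoord z j ^+ 2) / B <= qform y z.
Proof.
move=> n_gt0 oO bO [U [oU [OU r0C2]]] [V [oV [rOV riC2]]] riK pc riE c_gt0.
have [K K_gt0 r0K] : exists2 K, 0 < K &
    forall y, closure O y -> `|\sum_l `|partial r0 l y| | <= K.
  apply: bounded_on_closure bO OU _ => y Uy; apply: continuous_sum => l.
  exact: continuous_comp ((r0C2.2 l).2.1 y Uy) (@norm_continuous _ _ _).
have partial_r0_le y : O y -> forall l, `|partial r0 l y| <= K.
  move=> Oy l; apply: le_trans (r0K y (subset_closure Oy)).
  by rewrite ger0_norm ?sumr_ge0 // (bigD1 l) //= lerDl sumr_ge0.
exists ((n%:R * (n%:R * c * K)) ^+ 2) => [|y z].
  by rewrite exprn_gt0 // !mulr_gt0 // ltr0n.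
move: y; apply: le_on_closure => [|y Oy]; first exact: continuous_qform.
rewrite ler_pdivrMr ?exprn_gt0 ?mulr_gt0 ?ltr0n // mulrC.
apply: (sum_sqr_le_qform O V r0 ri c K oO oV) Oy.
- by move=> y' Oy'; apply: rOV; exists y' => //; exact: subset_closure.
- by move=> y' Oy'; exact: riK _ (subset_closure Oy').
- by move=> x Vx i; exact: (riC2.2 i).1 x Vx.
- by move=> x Vx i; exact: (riC2.2 i).2.1 x Vx.
- by move=> y' Oy' l; exact: (r0C2.2 l).1 y' (OU _ (subset_closure Oy')).
- exact: partial_r0_le.
- by move=> y' Oy' i k; exact: riE _ _ _ (subset_closure Oy').
- exact: ltW.
- exact: ltW.
Qed.

End Ellipticity.

Theorem lemma3p3 (R : realType) (n : nat) (O : set 'rV[R]_n)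
  (r rinv : R -> 'rV[R]_n -> 'rV[R]_n)
  (h : R -> R) (p : 'I_n -> 'I_n -> 'rV[R]_n -> R)
  (theta h0 h1 : R) :
  (3 <= n)%N ->
  open O -> bounded_set O -> C2_boundary O ->
  (* r in C^1(R x Obar, R^n) *)
  C1_joint (closure O) r ->
  (* for each t, r(t,.) : Obar -> r(t,Obar) is a C^2 diffeomorphism with inverse rinv(t,.) *)
  (forall t, Ck_on 2 (closure O) (r t)) ->
  (forall t, Ck_on 2 (r t @` closure O) (rinv t)) ->
  (forall t y, closure O y -> rinv t (r t y) = y) ->
  (forall t x, (r t @` closure O) x -> r t (rinv t x) = x) ->
  (* (H1) *)
  (forall t x, (r t @` closure O) x ->
     derivable (fun s => rinv s x) t 1 /\
     {for t, continuous (fun u => derive (fun s => rinv s x) u 1)}) ->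
  continuous h ->
  (forall i k, Ck 1 setT (p i k)) ->
  (forall t y (i k : 'I_n), closure O y ->
     partial (fun x => vcoord (rinv t x) k) i (r t y) = h t * p i k y) ->
  0 < theta -> theta <= 1 ->
  (exists L : R, forall s t, `|h s - h t| <= L * (`|s - t| `^ theta)) ->
  0 < h0 -> (forall t, h0 <= h t /\ h t <= h1) ->
  (* uniform strong ellipticity on [tau, T] *)
  forall tau T : R, tau < T ->
    exists C : R, 0 < C /\
      forall t y (z : 'rV[R]_n), tau <= t <= T -> closure O y ->
        \sum_(j < n) \sum_(k < n) acoef r rinv j k t y * vcoord z j * vcoord z k
          >= C * \sum_(j < n) vcoord z j ^+ 2.
Proof.
move=> n3 oO bO _ _ rC2 rinvC2 rK _ _ _ pC1 rinvE _ _ _ h0_gt0 hb tau T _.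
have h_gt0 t : 0 < h t := lt_le_trans h0_gt0 (hb t).1.
have pc i k : continuous (p i k) by move=> y; exact: (pC1 i k).1 y I.
have [B B_gt0 coercive] := qform_coercive p O (r 0) (rinv 0) (h 0)
  (ltn_trans (ltn0Sn 1) n3) oO bO (rC2 0) (rinvC2 0) (rK 0) pc (rinvE 0) (h_gt0 0).
exists (h0 ^+ 2 / B); split; first by rewrite divr_gt0 // exprn_gt0.
move=> t y z _ Oy; rewrite (acoef_qform p r rinv h) => [|i k]; last exact: rinvE.
have h0_le : h0 ^+ 2 <= h t ^+ 2 by have := (hb t).1; nra.
rewrite mulrAC -mulrA.
apply: le_trans (ler_wpM2l (sqr_ge0 h0) (coercive y z Oy)) _.
by rewrite ler_wpM2r // sumr_ge0 // => i _; exact: sqr_ge0.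
Qed.
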